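(* Let $S$ be a finite set of distinct lines in the plane, each having one of three distinct slopes. Consider the greedy algorithm that first repeatedly chooses (in any order) a point lying on three not-yet-hit lines of $S$ (necessarily one of each slope) and marks these three lines as hit, until no such point exists; and then, on the remaining unhit lines (no three of which are concurrent), repeatedly chooses a point at which two unhit lines cross, taking the two lines from the two slope classes currently having the largest numbers of unhit lines, and marks them as hit, until no two unhit lines cross; and finally places one point on each remaining unhit line. The number of points chosen by this algorithm is at most $\frac{7}{5}$ times the minimum cardinality of a hitting set for $S$.
   Context: A hitting set for a set of lines is a finite set of points such that every line contains at least one of the points. *)

From HB Require Import structures.
From mathcomp Require Import all_boot all_order all_algebra.
Set Implicit Arguments. Unset Strict Implicit. Unset Printing Implicit Defensive.
Import Order.TTheory GRing.Theory Num.Theory.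
Local Open Scope ring_scope.

Definition point (R : realFieldType) := (R * R)%type.

(* A line  { p | la * p.1 + lb * p.2 = lc }  with (la, lb) <> (0, 0). *)
Record line (R : realFieldType) := Line {
  la : R; lb : R; lc : R;
  line_nondeg : (la != 0) || (lb != 0) }.

Definition on_line (R : realFieldType) (l : line R) (p : point R) : bool :=
  la l * p.1 + lb l * p.2 == lc l.

Definition parallel_to (R : realFieldType) (l : line R) (d : R * R) : bool :=
  la l * d.1 + lb l * d.2 == 0.

Definition non_parallel (R : realFieldType) (d e : R * R) : bool :=
  d.1 * e.2 - d.2 * e.1 != 0.

(* The lines of S are L i, i : 'I_n.  Line i is hit by the points ps. *)
Definition hit (R : realFieldType) (n : nat) (L : 'I_n -> line R)
  (ps : seq (point R)) (i : 'I_n) : bool := has (on_line (L i)) ps.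

Definition hitting_set (R : realFieldType) (n : nat) (L : 'I_n -> line R)
  (H : seq (point R)) : Prop := forall i, hit L H i.

Definition unhit_count (R : realFieldType) (n : nat) (L : 'I_n -> line R)
  (d : 'I_3 -> R * R) (ps : seq (point R)) (c : 'I_3) : nat :=
  #|[set i | ~~ hit L ps i & parallel_to (L i) (d c)]|.

Definition phase1_step (R : realFieldType) (n : nat) (L : 'I_n -> line R)
  (pre : seq (point R)) (p : point R) : Prop :=
  exists i j k : 'I_n,
    [/\ [&& i != j, j != k & i != k],
        [&& ~~ hit L pre i, ~~ hit L pre j & ~~ hit L pre k] &
        [&& on_line (L i) p, on_line (L j) p & on_line (L k) p]].

Definition phase1 (R : realFieldType) (n : nat) (L : 'I_n -> line R)
  (ps1 : seq (point R)) : Prop :=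
  (forall k, (k < size ps1)%N ->
     phase1_step L (take k ps1) (nth (0, 0) ps1 k)) /\
  ~ (exists p, phase1_step L ps1 p).

Definition phase2_step (R : realFieldType) (n : nat) (L : 'I_n -> line R)
  (d : 'I_3 -> R * R) (pre : seq (point R)) (p : point R) : Prop :=
  exists (i j : 'I_n) (a b : 'I_3),
    [/\ a != b,
        ~~ hit L pre i /\ ~~ hit L pre j,
        parallel_to (L i) (d a) /\ parallel_to (L j) (d b),
        on_line (L i) p /\ on_line (L j) p &
        forall c : 'I_3, c != a -> c != b ->
          (unhit_count L d pre c <= unhit_count L d pre a)%N /\
          (unhit_count L d pre c <= unhit_count L d pre b)%N].

Definition phase2 (R : realFieldType) (n : nat) (L : 'I_n -> line R)
  (d : 'I_3 -> R * R) (pre ps2 : seq (point R)) : Prop :=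
  (forall k, (k < size ps2)%N ->
     phase2_step L d (pre ++ take k ps2) (nth (0, 0) ps2 k)) /\
  ~ (exists (i j : 'I_n) (p : point R),
       [/\ i != j, ~~ hit L (pre ++ ps2) i, ~~ hit L (pre ++ ps2) j,
           on_line (L i) p & on_line (L j) p]).

Definition phase3 (R : realFieldType) (n : nat) (L : 'I_n -> line R)
  (pre ps3 : seq (point R)) : Prop :=
  (forall i, ~~ hit L pre i -> hit L ps3 i) /\
  size ps3 = #|[set i | ~~ hit L pre i]|.

Definition greedy_run (R : realFieldType) (n : nat) (L : 'I_n -> line R)
  (d : 'I_3 -> R * R) (ps : seq (point R)) : Prop :=
  exists ps1 ps2 ps3 : seq (point R),
    [/\ ps = ps1 ++ ps2 ++ ps3, phase1 L ps1, phase2 L d ps1 ps2 &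
        phase3 L (ps1 ++ ps2) ps3].

From mathcomp Require Import all_boot all_order all_algebra.
From mathcomp Require Import zify ring.
Set Implicit Arguments. Unset Strict Implicit. Unset Printing Implicit Defensive.
Import Order.TTheory GRing.Theory Num.Theory.
Local Open Scope ring_scope.

(* Each point lies on at most one line of each slope class, so a hitting set [H] has at least
   as many points as the largest class.  Phase 1 places [t] points, each on one line of every
   class, leaving [m_c] lines of class [c] unhit; so class [c] has [t + m_c <= |H|] lines.
   After phase 1 no point lies on three unhit lines, so [m_0 + m_1 + m_2 <= 2 |H|].
   Phases 2 and 3 together place at most [max(m_0, m_1, m_2, ceil((m_0 + m_1 + m_2) / 2))]
   points: every phase-2 point decreases this potential by at least one, and when phase 2
   stops at most one class still has unhit lines, because lines of different slopes cross.
   These inequalities give [5 |ps| <= 7 |H|] except when [t = 1] and [m = (1, 1, 1)], where a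
   direct look at the three lines through the first point shows [|H| >= 3]. *)

Section PlaneGeometry.
Variable R : realFieldType.
Implicit Types (l : line R) (p q : point R) (v w : R * R).

Definition same_points l l' := forall p, on_line l p = on_line l' p.

Definition cross v w := v.1 * w.2 - v.2 * w.1.

Lemma coords_not_both0 (a b : R) : (a != 0) || (b != 0) -> a = 0 -> b = 0 -> False.
Proof. by move=> /orP[] /eqP. Qed.

Lemma non_parallel_neq0 v w : non_parallel v w -> (v.1 != 0) || (v.2 != 0).
Proof.
rewrite /non_parallel; apply: contraTT; rewrite negb_or !negbK.
by case/andP=> /eqP -> /eqP ->; rewrite !mul0r subrr.
Qed.

Lemma orthogonal_cross_eq0 (a b : R) v w : (a != 0) || (b != 0) ->
  (v.1 != 0) || (v.2 != 0) -> a * v.1 + b * v.2 = 0 ->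
  (a * w.1 + b * w.2 == 0) = (cross w v == 0).
Proof.
move=> ab_neq0 v_neq0 av0; rewrite /cross.
have E1 : (a * w.1 + b * w.2) * v.1 + b * (w.1 * v.2 - w.2 * v.1) = 0.
  by rewrite -(mulr0 w.1) -av0; ring.
have E2 : (a * w.1 + b * w.2) * v.2 - a * (w.1 * v.2 - w.2 * v.1) = 0.
  by rewrite -(mulr0 w.2) -av0; ring.
apply/eqP/eqP => [aw0|cr0].
  move/eqP: E1; move/eqP: E2; rewrite aw0 !mul0r !add0r oppr_eq0 !mulf_eq0.
  case/orP => [/eqP a0|/eqP //]; case/orP => [/eqP b0|/eqP //].
  by case: (coords_not_both0 ab_neq0 a0 b0).
move/eqP: E1; move/eqP: E2; rewrite cr0 !mulr0 addr0 subr0 !mulf_eq0.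
case/orP => [/eqP //|/eqP v20]; case/orP => [/eqP //|/eqP v10].
by case: (coords_not_both0 v_neq0 v10 v20).
Qed.

Lemma on_line_parallel l p q : on_line l p -> on_line l q = parallel_to l (q - p).
Proof.
rewrite /on_line /parallel_to => /eqP lp.
by rewrite -{1}lp -subr_eq0; congr (_ == 0); rewrite /=; ring.
Qed.

Lemma on_line_cross l v p q : (v.1 != 0) || (v.2 != 0) ->
  parallel_to l v -> on_line l p -> on_line l q = (cross (q - p) v == 0).
Proof.
move=> v_neq0 /eqP lv lp; rewrite (on_line_parallel q lp).
exact: orthogonal_cross_eq0 (line_nondeg l) v_neq0 lv.
Qed.

Lemma parallel_same_points l l' v p : (v.1 != 0) || (v.2 != 0) ->
  parallel_to l v -> parallel_to l' v -> on_line l p -> on_line l' p ->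
  same_points l l'.
Proof.
move=> v_neq0 lv l'v lp l'p q.
by rewrite (on_line_cross _ v_neq0 lv lp) (on_line_cross _ v_neq0 l'v l'p).
Qed.

Lemma two_points_same_points l l' p q : p != q ->
  on_line l p -> on_line l q -> on_line l' p -> on_line l' q -> same_points l l'.
Proof.
move=> pq lp lq l'p l'q.
have qp_neq0 : ((q - p).1 != 0) || ((q - p).2 != 0).
  move: pq; case: p q {lp lq l'p l'q} => [p1 p2] [q1 q2] /=.
  by apply: contraNT; rewrite negb_or !negbK !subr_eq0 => /andP[/eqP -> /eqP ->].
apply: (parallel_same_points qp_neq0 _ _ lp l'p); by rewrite -on_line_parallel.
Qed.

Lemma parallel_non_parallel l v w :
  parallel_to l v -> parallel_to l w -> ~~ non_parallel v w.
Proof.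
rewrite /parallel_to /non_parallel negbK => /eqP lv /eqP lw.
have E1 : la l * (v.1 * w.2 - v.2 * w.1) =
          w.2 * (la l * v.1 + lb l * v.2) - v.2 * (la l * w.1 + lb l * w.2) by ring.
have E2 : lb l * (v.1 * w.2 - v.2 * w.1) =
          v.1 * (la l * w.1 + lb l * w.2) - w.1 * (la l * v.1 + lb l * v.2) by ring.
rewrite lv lw !mulr0 subr0 in E1 E2.
apply: contraT => vw.
move/eqP: E1; move/eqP: E2; rewrite !mulf_eq0 (negbTE vw) !orbF => /eqP b0 /eqP a0.
by case: (coords_not_both0 (line_nondeg l) a0 b0).
Qed.

Lemma non_parallel_lines_meet l l' v w :
  parallel_to l v -> parallel_to l' w -> non_parallel v w ->
  exists p, on_line l p && on_line l' p.
Proof.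
move=> lv l'w vw.
set D := la l * lb l' - lb l * la l'.
have D_neq0 : D != 0.
  (* if [D = 0] the normal vectors of [l] and [l'] are proportional, so [l'] is parallel to [v] *)
  apply: contraTN vw => /eqP D0; apply: (parallel_non_parallel _ l'w).
  move: lv; rewrite /parallel_to => /eqP lv.
  set Y := la l' * v.1 + lb l' * v.2.
  have E1 : Y * la l = v.2 * D + la l' * (la l * v.1 + lb l * v.2) by rewrite /Y /D; ring.
  have E2 : Y * lb l = - (v.1 * D) + lb l' * (la l * v.1 + lb l * v.2) by rewrite /Y /D; ring.
  rewrite D0 lv !mulr0 oppr0 addr0 in E1 E2.
  move/eqP: E1; move/eqP: E2; rewrite !mulf_eq0.
  case/orP => [/eqP -> //|/eqP b0]; case/orP => [/eqP -> //|/eqP a0].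
  by case: (coords_not_both0 (line_nondeg l) a0 b0).
exists ((lc l * lb l' - lb l * lc l') / D, (la l * lc l' - lc l * la l') / D).
by rewrite /on_line /=; apply/andP; split; apply/eqP; rewrite /D; field.
Qed.

End PlaneGeometry.

Section NatBounds.
Local Open Scope nat_scope.

Lemma telescope_prefixes (T : Type) (f : seq T -> nat) (pre s : seq T) :
  (forall k, k < size s -> f (pre ++ take k.+1 s) < f (pre ++ take k s)) ->
  size s + f (pre ++ s) <= f pre.
Proof.
move=> f_decr; suff le_k k : k <= size s -> k + f (pre ++ take k s) <= f pre.
  by have := le_k _ (leqnn _); rewrite take_size.
elim: k => [|k IHk] lt_k; first by rewrite take0 cats0.
have := f_decr k lt_k; have := IHk (ltnW lt_k); lia.
Qed.

Definition c0 : 'I_3 := Ordinal (isT : 0 < 3).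
Definition c1 : 'I_3 := Ordinal (isT : 1 < 3).
Definition c2 : 'I_3 := Ordinal (isT : 2 < 3).

Lemma sum_ord3 (f : 'I_3 -> nat) : \sum_(c < 3) f c = f c0 + f c1 + f c2.
Proof. by rewrite !big_ord_recr big_ord0 /=; congr (_ + f _ + f _ + f _); apply: val_inj. Qed.

Lemma ord3_cover (a b c x : 'I_3) :
  a != b -> b != c -> a != c -> [|| x == a, x == b | x == c].
Proof. by move: a b c x; do 4![case=> [[|[|[|//]]] ?]]. Qed.

Lemma ord3E (x : 'I_3) : [|| x == c0, x == c1 | x == c2].
Proof. exact: ord3_cover. Qed.

Lemma pos3_of_sum_gt2 x y z :
  x <= 1 -> y <= 1 -> z <= 1 -> 2 < x + y + z -> [&& 0 < x, 0 < y & 0 < z].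
Proof. lia. Qed.

Definition potential (m0 m1 m2 : nat) :=
  maxn (maxn m0 m1) (maxn m2 ((m0 + m1 + m2 + 1) %/ 2)).

Lemma potential_step (f f' g : 'I_3 -> nat) a b : a != b ->
  (forall c, f c = f' c + g c) -> 0 < g a -> 0 < g b -> g c0 + g c1 + g c2 <= 2 ->
  (forall c, c != a -> c != b -> f c <= f a /\ f c <= f b) ->
  potential (f' c0) (f' c1) (f' c2) < potential (f c0) (f c1) (f c2).
Proof.
move=> ab fE ga gb g_le2 largest; rewrite /potential.
have := fE c0; have := fE c1; have := fE c2.
case/or3P: (ord3E a) ab ga gb largest => /eqP->;
  case/or3P: (ord3E b) => /eqP-> //= _ ga gb largest.
- by have [] := largest c2 isT isT; lia.
- by have [] := largest c1 isT isT; lia.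
- by have [] := largest c2 isT isT; lia.
- by have [] := largest c0 isT isT; lia.
- by have [] := largest c1 isT isT; lia.
- by have [] := largest c0 isT isT; lia.
Qed.

Lemma potential_single x y z :
  x = 0 \/ y = 0 -> y = 0 \/ z = 0 -> x = 0 \/ z = 0 -> x + y + z <= potential x y z.
Proof. rewrite /potential; lia. Qed.

Lemma greedy_ratio_arith t m0 m1 m2 h s :
  t + m0 <= h -> t + m1 <= h -> t + m2 <= h -> m0 + m1 + m2 <= 2 * h ->
  (t = 1 -> m0 + m1 + m2 = 3 -> 3 <= h) ->
  s <= potential m0 m1 m2 -> 5 * (t + s) <= 7 * h.
Proof. rewrite /potential; lia. Qed.

End NatBounds.

Section GreedyHittingSet.
Local Open Scope nat_scope.
Variables (R : realFieldType) (n : nat) (d : 'I_3 -> R * R).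
Hypothesis d_non_parallel : forall a b : 'I_3, a != b -> non_parallel (d a) (d b).
Variable L : 'I_n -> line R.
Hypothesis L_inj : forall i j : 'I_n, same_points (L i) (L j) -> i = j.
Hypothesis L_sloped : forall i : 'I_n, exists a : 'I_3, parallel_to (L i) (d a).

Definition through p := [set i | on_line (L i) p].
Definition slope_class c := [set i | parallel_to (L i) (d c)].
Definition unhit pre := [set i | ~~ hit L pre i].

Lemma neq_of_parallel i j a b :
  parallel_to (L i) (d a) -> parallel_to (L j) (d b) -> a != b -> i != j.
Proof.
move=> ia jb /d_non_parallel; apply: contraTneq => ij; rewrite ij in ia.
exact: parallel_non_parallel ia jb.
Qed.

Lemma same_class_through i j c p : parallel_to (L i) (d c) -> parallel_to (L j) (d c) ->
  on_line (L i) p -> on_line (L j) p -> i = j.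
Proof.
move=> ic jc ip jp.
have [c' cc'] : exists c', c != c'.
  by exists (if c == c0 then c1 else c0); case: (eqVneq c c0) => [->|].
exact: L_inj (parallel_same_points (non_parallel_neq0 (d_non_parallel cc')) ic jc ip jp).
Qed.

Lemma through_class_le1 (A : {set 'I_n}) p c : #|A :&: through p :&: slope_class c| <= 1.
Proof.
apply/card_le1_eqP => i j; rewrite !in_setI !inE => /andP[/andP[_ ip] ic] /andP[/andP[_ jp] jc].
by rewrite (same_class_through jc ic jp ip).
Qed.

Lemma sum_slope_classes i : \sum_(c < 3) (i \in slope_class c) = 1.
Proof.
have [c ic] := L_sloped i.
rewrite (bigD1 c) //= inE ic big1 // => c' c'c; rewrite inE.
by case: (boolP (parallel_to _ _)) => // ic'; have := neq_of_parallel ic' ic c'c; rewrite eqxx.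
Qed.

Lemma card_by_class (A : {set 'I_n}) :
  #|A| = #|A :&: slope_class c0| + #|A :&: slope_class c1| + #|A :&: slope_class c2|.
Proof.
rewrite -(sum_ord3 (fun c => #|A :&: slope_class c|)) -sum1_card.
rewrite (eq_bigr _ (fun i _ => esym (sum_slope_classes i))) exchange_big.
apply: eq_bigr => c _.
by rewrite -big_mkcondr sum1_card; apply: eq_card => i; rewrite in_setI.
Qed.

Lemma card_le_hitting (H : seq (point R)) (A : {set 'I_n}) k :
  (forall i, i \in A -> hit L H i) -> (forall p, p \in H -> #|A :&: through p| <= k) ->
  #|A| <= k * size H.
Proof.
elim: H A => [|p H IH] A hitA le_k.
  by rewrite muln0 leqn0 cards_eq0; apply/eqP/setP => i; rewrite inE; apply/negP => /hitA.
rewrite -(cardsID (through p) A) /= mulnS leq_add ?le_k ?mem_head //.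
apply: IH => [i|q qH]; first by rewrite !inE => /andP[ip /hitA]; rewrite /hit /= (negbTE ip).
apply: leq_trans (le_k q _); last by rewrite inE qH orbT.
exact/subset_leq_card/setSI/subsetDl.
Qed.

Lemma unhit_nil : unhit [::] = setT.
Proof. by apply/setP => i; rewrite !inE. Qed.

Lemma unhit_rcons pre p : unhit (rcons pre p) = unhit pre :\: through p.
Proof. by apply/setP => i; rewrite !inE /hit has_rcons negb_or andbC. Qed.

Lemma unhit_cat_subset s1 s2 : unhit (s1 ++ s2) \subset unhit s1.
Proof. by apply/subsetP => i; rewrite !inE /hit has_cat negb_or => /andP[]. Qed.

Lemma unhit_countE pre c : unhit_count L d pre c = #|unhit pre :&: slope_class c|.
Proof. by apply: eq_card => i; rewrite !inE. Qed.

Lemma unhit_count_rcons pre p c : unhit_count L d pre c =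
  unhit_count L d (rcons pre p) c + #|unhit pre :&: through p :&: slope_class c|.
Proof.
rewrite !unhit_countE -(cardsID (through p) (unhit pre :&: slope_class c)) addnC setIAC.
by congr (_ + _); apply: eq_card => i; rewrite unhit_rcons !inE andbA.
Qed.

Lemma card_unhit pre :
  #|unhit pre| = unhit_count L d pre c0 + unhit_count L d pre c1 + unhit_count L d pre c2.
Proof. by rewrite card_by_class !unhit_countE. Qed.


Lemma phase1_step_meets_class pre p c :
  phase1_step L pre p -> 0 < #|unhit pre :&: through p :&: slope_class c|.
Proof.
case=> i [j [k [/and3P[ij jk ik] /and3P[ui uj uk] /and3P[ip jp kp]]]].
have [ci ici] := L_sloped i; have [cj jcj] := L_sloped j; have [ck kck] := L_sloped k.
have distinct x y a b : parallel_to (L x) (d a) -> parallel_to (L y) (d b) ->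
    on_line (L x) p -> on_line (L y) p -> x != y -> a != b.
  move=> xa yb xp yp; apply: contraNneq => ab; rewrite ab in xa.
  exact/eqP/(same_class_through xa yb xp yp).
have := ord3_cover c (distinct _ _ _ _ ici jcj ip jp ij)
  (distinct _ _ _ _ jcj kck jp kp jk) (distinct _ _ _ _ ici kck ip kp ik).
case/or3P=> /eqP->; apply/card_gt0P; [exists i|exists j|exists k].
- by rewrite !inE ui ip ici.
- by rewrite !inE uj jp jcj.
- by rewrite !inE uk kp kck.
Qed.

Lemma phase1_count_le ps1 c :
  phase1 L ps1 -> size ps1 + unhit_count L d ps1 c <= #|slope_class c|.
Proof.
have -> : #|slope_class c| = unhit_count L d [::] c by rewrite unhit_countE unhit_nil setTI.
case=> steps _.
apply: (@telescope_prefixes _ (fun s => unhit_count L d s c) [::]) => k lt_k /=.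
rewrite (take_nth (0%R, 0%R) lt_k) [X in _ < X](unhit_count_rcons _ (nth (0%R, 0%R) ps1 k)).
by rewrite -[X in X < _]addn0 ltn_add2l; exact: phase1_step_meets_class (steps k lt_k).
Qed.

Lemma phase1_through_le2 ps1 p : phase1 L ps1 -> #|unhit ps1 :&: through p| <= 2.
Proof.
case=> _ no_step; rewrite leqNgt; apply/negP => gt2; apply: no_step; exists p.
have le1 c := through_class_le1 (unhit ps1) p c.
rewrite card_by_class in gt2.
have /and3P[/card_gt0P[i] + /card_gt0P[j] + /card_gt0P[k]] :=
  pos3_of_sum_gt2 (le1 c0) (le1 c1) (le1 c2) gt2.
rewrite !inE => /andP[/andP[ui ip] ic] /andP[/andP[uj jp] jc] /andP[/andP[uk kp] kc].
exists i, j, k; split; last by rewrite ip jp kp.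
- by rewrite (neq_of_parallel ic jc) ?(neq_of_parallel jc kc) ?(neq_of_parallel ic kc).
- by rewrite ui uj uk.
Qed.

Definition potential_of pre :=
  potential (unhit_count L d pre c0) (unhit_count L d pre c1) (unhit_count L d pre c2).

Lemma phase2_step_potential ps1 pre p : phase1 L ps1 -> unhit pre \subset unhit ps1 ->
  phase2_step L d pre p -> potential_of (rcons pre p) < potential_of pre.
Proof.
move=> ph1 pre_ps1 [i [j [a [b [ab [ui uj] [ia jb] [ip jp] largest]]]]].
apply: (potential_step (g := fun c => #|unhit pre :&: through p :&: slope_class c|) ab).
- exact: unhit_count_rcons.
- by apply/card_gt0P; exists i; rewrite !inE ui ip ia.
- by apply/card_gt0P; exists j; rewrite !inE uj jp jb.
- rewrite -card_by_class; apply: leq_trans (phase1_through_le2 p ph1).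
  exact/subset_leq_card/setSI.
- exact: largest.
Qed.

Lemma phase2_potential ps1 ps2 : phase1 L ps1 -> phase2 L d ps1 ps2 ->
  size ps2 + potential_of (ps1 ++ ps2) <= potential_of ps1.
Proof.
move=> ph1 [steps _]; apply: telescope_prefixes => k lt_k.
rewrite (take_nth (0%R, 0%R) lt_k) -rcons_cat.
exact: phase2_step_potential ph1 (unhit_cat_subset _ _) (steps k lt_k).
Qed.

Lemma phase2_end_class_empty ps1 ps2 a b : phase2 L d ps1 ps2 -> a != b ->
  unhit_count L d (ps1 ++ ps2) a = 0 \/ unhit_count L d (ps1 ++ ps2) b = 0.
Proof.
case=> _ no_crossing ab; rewrite !unhit_countE.
have [|/card_gt0P[i]] := posnP #|unhit (ps1 ++ ps2) :&: slope_class a|; first by left.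
rewrite !inE => /andP[ui ia]; right; apply/eqP; rewrite cards_eq0; apply/eqP/setP => j.
rewrite !inE; apply/negbTE/negP => /andP[uj jb].
have [q /andP[iq jq]] := non_parallel_lines_meet ia jb (d_non_parallel ab).
by apply: no_crossing; exists i, j, q; split=> //; exact: neq_of_parallel ia jb ab.
Qed.

Lemma phases23_size_le ps1 ps2 : phase1 L ps1 -> phase2 L d ps1 ps2 ->
  size ps2 + #|unhit (ps1 ++ ps2)| <= potential_of ps1.
Proof.
move=> ph1 ph2; apply: leq_trans (phase2_potential ph1 ph2).
by rewrite leq_add2l card_unhit; apply: potential_single; apply: (phase2_end_class_empty ph2).
Qed.

Lemma through_two_points_le1 g p : p != g -> #|through g :&: through p| <= 1.
Proof.
move=> pg; apply/card_le1_eqP => i j; rewrite !inE => /andP[ig ip] /andP[jg jp].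
exact: L_inj (two_points_same_points pg jp jg ip ig).
Qed.

Lemma hitting_class_le H c : hitting_set L H -> #|slope_class c| <= size H.
Proof.
move=> hitH; rewrite -[size H]mul1n; apply: card_le_hitting => [i _ | p _]; first exact: hitH.
by have := through_class_le1 setT p c; rewrite setTI setIC.
Qed.

Lemma hitting_unhit_le ps1 H : phase1 L ps1 -> hitting_set L H -> #|unhit ps1| <= 2 * size H.
Proof.
move=> ph1 hitH; apply: card_le_hitting => [i _ | p _]; first exact: hitH.
exact: phase1_through_le2.
Qed.

(* If [g] is in [H], the other points of [H] hit the three lines left unhit, at most two at a
   time; otherwise each point of [H] meets at most one of the three lines through [g]. *)
Lemma hitting_after_first_point ps1 H : phase1 L ps1 -> size ps1 = 1 ->
  #|unhit ps1| = 3 -> hitting_set L H -> 3 <= size H.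
Proof.
case: ps1 => [|g [|//]] // ph1 _ unhit3 hitH.
have [gH|gNH] := boolP (g \in H).
  suff : #|unhit [:: g]| <= 2 * size (rem g H).
    by rewrite unhit3 size_rem //; case: (size H) => [|[|[|]]].
  apply: (card_le_hitting (k := 2)) => [i | p _]; last exact: phase1_through_le2.
  rewrite !inE /hit /= orbF => ig; move: (hitH i).
  by rewrite /hit (perm_has _ (perm_to_rem gH)) /= (negbTE ig).
have three_le_through_g : 3 <= #|through g|.
  have pos c := phase1_step_meets_class c (ph1.1 0 isT).
  rewrite -[through g]setTI -unhit_nil card_by_class.
  by rewrite -[3]/(1 + 1 + 1); apply: leq_add; [apply: leq_add|]; apply: pos.
apply: leq_trans three_le_through_g _; rewrite -[size H]mul1n.
apply: card_le_hitting => [i _ | p pH]; first exact: hitH.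
by rewrite through_two_points_le1 //; apply: contraNneq gNH => <-.
Qed.

Lemma greedy_run_le ps H : greedy_run L d ps -> hitting_set L H ->
  5 * size ps <= 7 * size H.
Proof.
case=> ps1 [ps2 [ps3 [-> ph1 ph2 [_ size3]]]] hitH.
have class_le c := leq_trans (phase1_count_le c ph1) (hitting_class_le c hitH).
rewrite !size_cat size3.
apply: (greedy_ratio_arith (class_le c0) (class_le c1) (class_le c2)).
- by rewrite -card_unhit; exact: hitting_unhit_le ph1 hitH.
- by move=> size1 unhit3; apply: hitting_after_first_point ph1 size1 _ hitH; rewrite card_unhit.
- exact: phases23_size_le ph1 ph2.
Qed.

End GreedyHittingSet.

(* A hitting list with repetitions is only longer. *)
Theorem mainTheorem4 (R : realFieldType) (n : nat) (d : 'I_3 -> R * R)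
  (hd : forall a b : 'I_3, a != b -> non_parallel (d a) (d b))
  (L : 'I_n -> line R)
  (hL : forall i j : 'I_n,
          (forall p : point R, on_line (L i) p = on_line (L j) p) -> i = j)
  (hS : forall i : 'I_n, exists a : 'I_3, parallel_to (L i) (d a))
  (ps : seq (point R)) (hrun : greedy_run L d ps)
  (H : seq (point R)) (hU : uniq H) (hH : hitting_set L H) :
  (5 * size ps <= 7 * size H)%N.
Proof. exact: (greedy_run_le hd hL hS hrun hH). Qed.
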